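(* Let $b,n,c$ be positive integers with $4\leqslant 4b\leqslant n$. For every abelian group $\Gamma$ of order $4nbc$ there exists a diagonal $\mathrm{MRS}_\Gamma(n;4b;c)$.
   Context: For positive integers $m,n,s,k,c$ and an abelian group $\Gamma$ of order $nkc$, an $\mathrm{MRS}_\Gamma(m,n;s,k;c)$ is a set of $c$ partially filled $m\times n$ arrays (some cells may be empty) with entries in $\Gamma$ such that: every element of $\Gamma$ appears exactly once and in a unique array; in every array each row contains exactly $s$ filled cells and each column contains exactly $k$ filled cells; and there exist $\omega,\delta\in\Gamma$ such that in every array each row sum is $\omega$ and each column sum is $\delta$. $\mathrm{MRS}_\Gamma(n;k;c)$ denotes $\mathrm{MRS}_\Gamma(n,n;k,k;c)$. In an $n\times n$ array, for $0\leqslant \ell\leqslant n-1$ the diagonal $D_\ell$ is the set of cells $(i,j)$ with $j-i\equiv \ell\pmod n$. An $\mathrm{MRS}_\Gamma(n;k;c)$ is diagonal if, in each of its arrays, the filled cells are exactly the cells of $k$ consecutive diagonals $D_{t},\ldots,D_{t+k-1}$ (indices modulo $n$). *)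

From mathcomp Require Import all_boot all_order all_algebra.
Set Implicit Arguments. Unset Strict Implicit. Unset Printing Implicit Defensive.
Import GRing.Theory.
Local Open Scope ring_scope.

(* A family of c partially filled m x n arrays with entries in G:
   A a i j = Some g  means cell (i,j) of array a is filled with g,
   A a i j = None    means the cell is empty. *)
Definition arrays (G : Type) (m n c : nat) := 'I_c -> 'I_m -> 'I_n -> option G.

Definition is_MRS (G : finZmodType) (m n s k c : nat) (A : arrays G m n c) : Prop :=
  [/\ #|G| = (n * k * c)%N,
      (forall g : G,
          #|[set t : 'I_c * 'I_m * 'I_n | A t.1.1 t.1.2 t.2 == Some g]| = 1%N),
      (forall (a : 'I_c) (i : 'I_m), #|[set j : 'I_n | A a i j != None]| = s),
      (forall (a : 'I_c) (j : 'I_n), #|[set i : 'I_m | A a i j != None]| = k) &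
      exists (w d : G),
        (forall (a : 'I_c) (i : 'I_m), \sum_(j : 'I_n) odflt 0 (A a i j) = w) /\
        (forall (a : 'I_c) (j : 'I_n), \sum_(i : 'I_m) odflt 0 (A a i j) = d)].

Definition on_diag (n : nat) (i j : 'I_n) (l : nat) : bool :=
  ((i + l) %% n)%N == j.

Definition diagonal_arrays (G : Type) (n k c : nat) (A : arrays G n n c) : Prop :=
  forall a : 'I_c, exists t : 'I_n, forall i j : 'I_n,
    isSome (A a i j) = [exists l : 'I_k, on_diag i j (t + l)%N].

(* Choose d of order 2 and h such that neither h nor h + d is a double; such a
   pair exists as soon as 4 divides |G|, by comparing the doubles with the
   kernel of doubling. The maps x |-> h - x and x |-> x + d then generate a free
   action of the Klein four-group on G, so G is the disjoint union of n b c
   orbits {x, h - x + d, x + d, h - x}; label them x(a, q, k) with a < c, q < b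
   and k < n. In array a, the diagonals 4q, ..., 4q+3 of row i carry
   h - y + d, x, y + d, h - x where x = x(a, q, i) and y = x(a, q, i - 1).
   Such a row segment sums to 2(h + d); so does every column segment, because
   diagonals 4q and 4q+1 (resp. 4q+2 and 4q+3) meet a column in two elements
   h - z + d, z (resp. z + d, h - z) of one orbit. *)

From mathcomp Require Import all_boot all_order all_algebra.
From mathcomp Require Import fingroup morphism quotient pgroup zify.
Set Implicit Arguments. Unset Strict Implicit. Unset Printing Implicit Defensive.
Import GRing.Theory FinRing.Theory.
Local Open Scope group_scope.
Local Open Scope ring_scope.

Section Doubling.
Variable G : finZmodType.

Lemma order2_zmod (x : G) : #[x]%g = 2%N -> x + x = 0 /\ x != 0.
Proof.
move=> ox; split; first by have := expg_order x; rewrite ox zmodXgE mulr2n.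
by apply/eqP=> x0; move: ox; rewrite x0 -zmod1gE order1.
Qed.

Lemma doubling_morph : {in [set: G] &, {morph (fun x : G => x + x) : x y / (x * y)%g}}.
Proof. by move=> x y _ _; rewrite !zmodMgE addrACA. Qed.

Canonical doubling := Morphism doubling_morph.

Lemma mem_ker_doubling x : (x \in 'ker doubling) = (x + x == 0).
Proof.
apply/idP/eqP => [/mker // | xx0].
by apply/kerP; rewrite ?inE.
Qed.

Lemma mem_im_doubling x : x + x \in doubling @* [set: G].
Proof. by rewrite -[x + x]/(doubling x) mem_morphim ?inE. Qed.

Lemma card_ker_im_doubling :
  (#|'ker doubling| * #|doubling @* [set: G]|)%N = #|G|.
Proof. by rewrite card_morphim setIid -cardsT (Lagrange (subsetT _)). Qed.

Lemma exists_klein_pair : (4 %| #|G|)%N ->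
  exists h d : G, [/\ d != 0, d + d = 0, forall g : G, g + g != h
                    & forall g : G, g + g != h + d].
Proof.
move=> G4; set K := 'ker doubling; set D := doubling @* [set: G].
have KD := card_ker_im_doubling; rewrite -/K -/D in KD.
have G2 : (2 %| #|[set: G]|)%N by rewrite cardsT (dvdn_trans _ G4).
have [x0 _ /order2_zmod [x0x0 x0n0]] := @Cauchy _ 2 [set: G]%G isT G2.
have D_gt0 : (0 < #|D|)%N by apply/card_gt0P; exists (0 + 0); apply: mem_im_doubling.
have [K_le2 | K_gt2] := leqP #|K| 2.
  have K2 : #|K| = 2%N.
    apply/eqP; rewrite eqn_leq K_le2 /=.
    have <- : #|[set 0; x0]| = 2%N by rewrite cards2 eq_sym x0n0.
    apply: subset_leq_card.
    by apply/subsetP => z /set2P [] ->; rewrite mem_ker_doubling ?addr0 ?x0x0.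
  have D2 : (2 %| #|D|)%N.
    by move: G4; rewrite -KD K2 (_ : 4 = 2 * 2)%N // dvdn_pmul2l.
  have [d dD /order2_zmod [dd dn0]] := @Cauchy _ 2 D isT D2.
  have /subsetPn [h _ hD] : ~~ ([set: G] \subset D).
    by apply/negP => /subset_leq_card; rewrite cardsT -KD K2 leqNgt ltn_Pmull.
  exists h, d; split=> // g; apply/eqP => hg; move: hD.
    by rewrite -hg mem_im_doubling.
  have -> : h = (g + g) + d by rewrite hg -addrA dd addr0.
  by rewrite -zmodMgE groupM ?mem_im_doubling.
pose U := D :|: [set z + x0 | z in D].
have U_le : (#|U| <= 2 * #|D|)%N.
  by rewrite mul2n -addnn (leq_trans (leq_card_setU _ _)) // leq_add2l leq_imset_card.
have /subsetPn [h _ hU] : ~~ ([set: G] \subset U).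
  apply/negP => /subset_leq_card; rewrite cardsT -KD => /leq_trans/(_ U_le).
  by rewrite leq_pmul2r // leqNgt K_gt2.
exists h, x0; split=> // g; apply/eqP => hg; move: hU; rewrite inE.
  by rewrite -hg mem_im_doubling.
have -> : h = (g + g) + x0 by rewrite hg -addrA x0x0 addr0.
by rewrite (imset_f (fun z => z + x0)) ?orbT ?mem_im_doubling.
Qed.

End Doubling.

Section KleinMaps.
Variables (G : zmodType) (h d : G).

Definition klein (st : bool * bool) (x : G) : G :=
  (if st.1 then h - x else x) + (if st.2 then d else 0).

Lemma klein_row_block y z :
  klein (true, true) y + klein (false, false) z + klein (false, true) y
    + klein (true, false) z = (h + d) *+ 2.
Proof.
rewrite /klein /= !addr0 -addrA addrACA [h - y + d + _]addrACA subrK.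
by rewrite [z + _]addrC subrK mulr2n addrACA addrAC.
Qed.

Lemma klein_col_block y z :
  klein (true, true) y + klein (false, false) y + klein (false, true) z
    + klein (true, false) z = (h + d) *+ 2.
Proof.
rewrite /klein /= !addr0 [h - y + d + y]addrAC subrK -addrA [z + d + _]addrAC.
by rewrite [z + _]addrC subrK mulr2n.
Qed.

Lemma klein0 x : klein (false, false) x = x.
Proof. by rewrite /klein addr0. Qed.

Hypothesis dd : d + d = 0.

Lemma kleinM st st' x :
  klein st (klein st' x) = klein (st.1 (+) st'.1, st.2 (+) st'.2) x.
Proof.
have oppd : - d = d by apply/eqP; rewrite eq_sym -subr_eq0 opprK dd.
case: st st' => [[] []] [[] []]; rewrite /klein /= !(addr0, opprD, opprK, oppd) //.
all: by rewrite ?subr0 ?addrA ?subrr ?add0r -?[_ + d + d]addrA ?dd ?addr0.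
Qed.

Lemma kleinK st : involutive (klein st).
Proof. by move=> x; rewrite kleinM !addbb klein0. Qed.

Hypotheses (d_neq0 : d != 0)
  (h_nondouble : forall g : G, g + g != h) (hd_nondouble : forall g : G, g + g != h + d).

Lemma klein_fixed st x : klein st x = x -> st = (false, false).
Proof.
rewrite /klein; case: st => [[] []] /= /eqP; rewrite ?addr0 //.
- by rewrite addrAC subr_eq eq_sym (negbTE (hd_nondouble x)).
- by rewrite subr_eq eq_sym (negbTE (h_nondouble x)).
- by rewrite -subr_eq0 addrC addKr (negbTE d_neq0).
Qed.

Lemma klein_free x : injective (klein^~ x).
Proof.
move=> st st' /(congr1 (klein st')); rewrite kleinK kleinM => /klein_fixed.
by case: st st' => [[] []] [[] []].
Qed.

End KleinMaps.

Section KleinTransversal.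
Variables (G : finZmodType) (h d : G).
Hypotheses (d_neq0 : d != 0) (dd : d + d = 0)
  (h_nondouble : forall g : G, g + g != h) (hd_nondouble : forall g : G, g + g != h + d).
Local Notation klein := (klein h d).

Definition klein_orbit x : {set G} := [set klein st x | st : bool * bool].

Definition klein_rep x : G := odflt 0 [pick y in klein_orbit x].

Lemma klein_orbit_refl x : x \in klein_orbit x.
Proof. by apply/imsetP; exists (false, false); rewrite ?klein0. Qed.

Lemma klein_orbitM st x : klein_orbit (klein st x) = klein_orbit x.
Proof.
apply/setP => y; apply/imsetP/imsetP => [] [st' _ ->].
  by exists (st'.1 (+) st.1, st'.2 (+) st.2); rewrite ?(kleinM h dd).
exists (st'.1 (+) st.1, st'.2 (+) st.2) => //.
by rewrite (kleinM h dd) /= -!addbA !addbb !addbF -surjective_pairing.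
Qed.

Lemma klein_repM st x : klein_rep (klein st x) = klein_rep x.
Proof. by rewrite /klein_rep klein_orbitM. Qed.

Lemma klein_rep_in_orbit x : klein_rep x \in klein_orbit x.
Proof. by rewrite /klein_rep; case: pickP => [y // | /(_ x)]; rewrite klein_orbit_refl. Qed.

Lemma klein_repK x : klein_rep (klein_rep x) = klein_rep x.
Proof. by have /imsetP [st _ e] := klein_rep_in_orbit x; rewrite {1}e klein_repM. Qed.

Lemma klein_rep_spec x : exists st, x = klein st (klein_rep x).
Proof.
by have /imsetP [st _ ->] := klein_rep_in_orbit x; exists st; rewrite (kleinK h dd).
Qed.

Definition klein_transversal : {set G} := [set x | klein_rep x == x].

Lemma card_klein_transversal : (#|G| <= 4 * #|klein_transversal|)%N.
Proof.
rewrite -cardsT (_ : 4 = #|[set: bool * bool]|)%N; last by rewrite cardsT card_prod card_bool.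
rewrite -cardsX (leq_trans _ (leq_imset_card (fun p => klein p.1 p.2) _)) //.
apply: subset_leq_card; apply/subsetP => x _; have [st ->] := klein_rep_spec x.
by rewrite (imset_f _ (_ : (st, klein_rep x) \in _)) // !inE /= klein_repK.
Qed.

Lemma klein_transversal_inj :
  {in setX [set: bool * bool] klein_transversal &, injective (fun p => klein p.1 p.2)}.
Proof.
move=> [st r] [st' r']; rewrite !inE /= => /eqP rr /eqP rr' e.
have err' : r = r' by rewrite -rr -rr' -(klein_repM st) e klein_repM.
by move: e; rewrite -err' => /(klein_free dd d_neq0 h_nondouble hd_nondouble) ->.
Qed.

Lemma exists_klein_labelling (T : finType) : (4 * #|T| <= #|G|)%N ->
  exists x : T -> G, injective (fun p : bool * bool * T => klein p.1 (x p.2)).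
Proof.
move=> T_le; have TR : (#|T| <= #|klein_transversal|)%N.
  by rewrite -(leq_pmul2l (isT : (0 < 4)%N)) (leq_trans T_le) ?card_klein_transversal.
pose x t := enum_val (widen_ord TR (enum_rank t)).
have xR t : x t \in klein_transversal := enum_valP _.
have x_inj : injective x.
  by move=> t t' /enum_val_inj /(congr1 val) /= /ord_inj /enum_rank_inj.
exists x => [[st t] [st' t']] /= e.
have [-> /x_inj -> //] : (st, x t) = (st', x t').
by apply: (@klein_transversal_inj (st, x t) (st', x t')); rewrite ?in_setX ?in_setT ?xR.
Qed.

End KleinTransversal.

Lemma big_nat_blocks4 (V : nmodType) (b : nat) (F : nat -> V) :
  \sum_(0 <= l < 4 * b) F l =
  \sum_(q < b) (F (4 * q + 0)%N + F (4 * q + 1)%N + F (4 * q + 2)%N + F (4 * q + 3)%N).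
Proof.
rewrite mulnC big_nat_mul big_mkord; apply: eq_bigr => q _.
rewrite mulSn addnC -{1}(add0n (q * 4)%N) big_addn addKn /index_iota subn0 /= !big_cons big_nil.
by rewrite addr0 !addrA !(mulnC 4) !(addnC _ (q * 4)%N).
Qed.

Lemma card_ord_lt (n k : nat) : (k <= n)%N -> #|[set l : 'I_n | (l < k)%N]| = k.
Proof.
move=> kn; rewrite -sum1_card (eq_bigl (fun l : 'I_n => (l < k)%N)) => [|l]; last by rewrite inE.
by rewrite -(big_ord_widen _ (fun=> 1%N)) // sum1_card card_ord.
Qed.

Lemma card_fiber_Some (T U : finType) (f : T -> option U) :
  #|[set t | f t != None]| = #|U| ->
  (forall t t' u, f t = Some u -> f t' = Some u -> t = t') ->
  forall u, #|[set t | f t == Some u]| = 1%N.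
Proof.
move=> card_dom f_inj u; set D := [set t | f t != None].
have /= val_inj : {in D &, injective (fun t => odflt u (f t))}.
  move=> t t'; rewrite !inE; case Et: (f t) => [v|] //; case Et': (f t') => [v'|] //= _ _ vv'.
  by apply: f_inj Et _; rewrite Et' vv'.
have : u \in (fun t => odflt u (f t)) @: D.
  have -> : (fun t => odflt u (f t)) @: D = setT.
    by apply/eqP; rewrite eqEcard subsetT cardsT (card_in_imset val_inj) card_dom leqnn.
  by rewrite inE.
case/imsetP => t0; rewrite inE; case Et0: (f t0) => [v|] //= _ vu; subst v.
rewrite -(cards1 t0); apply: eq_card => t; rewrite !inE.
by apply/eqP/eqP => [/f_inj/(_ Et0) | ->].
Qed.

Lemma card_filled_cells (G : eqType) (m n c s : nat) (A : arrays G m n c) :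
  (forall a i, #|[set j | A a i j != None]| = s) ->
  #|[set t : 'I_c * 'I_m * 'I_n | A t.1.1 t.1.2 t.2 != None]| = (c * m * s)%N.
Proof.
move=> row_card; rewrite -sum1dep_card.
rewrite -(pair_big_dep xpredT (fun ai j => A ai.1 ai.2 j != None) (fun _ _ => 1%N)) /=.
under eq_bigr => ai _ do rewrite sum1dep_card row_card.
by rewrite sum_nat_const card_prod !card_ord.
Qed.

Lemma on_diagE (n : nat) (i j : 'I_n.+1) (l : nat) :
  (l < n.+1)%N -> on_diag i j l = ((j - i)%R == l :> nat).
Proof.
move=> l_lt; pose L := Ordinal l_lt; rewrite -[l]/(nat_of_ord L).
by rewrite val_eqE subr_eq addrC eq_sym -val_eqE.
Qed.

Section DiagonalConstruction.
Variables (G : finZmodType) (h d : G) (b' c n' : nat).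
Local Notation b := b'.+1.
Local Notation n := n'.+2.
Hypothesis b_le_n : (4 * b <= n)%N.
Variable x : 'I_c * 'I_b * 'I_n -> G.
Local Notation klein := (klein h d).

Definition sign_pattern (p : nat) : bool * bool :=
  match p with 0 => (true, true) | 1 => (false, false) | 2 => (false, true) | _ => (true, false) end.

Definition row_shift (p : nat) : 'I_n := (~~ odd p)%:R.

Definition diag_entry (a : 'I_c) (i : 'I_n) (l : nat) : G :=
  klein (sign_pattern (l %% 4)) (x (a, inord (l %/ 4), i - row_shift (l %% 4))).

Definition diag_offset (i j : 'I_n) : 'I_n := j - i.

Definition diag_array : arrays G n n c := fun a i j =>
  if (diag_offset i j < 4 * b)%N then Some (diag_entry a i (diag_offset i j)) else None.

Lemma diag_entry_block a i (q : 'I_b) p : (p < 4)%N ->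
  diag_entry a i (4 * q + p) = klein (sign_pattern p) (x (a, q, i - row_shift p)).
Proof.
move=> p_lt4; rewrite /diag_entry mulnC modnMDl divnMDl // modn_small //.
by rewrite divn_small // addn0 inord_val.
Qed.

Lemma sum_diag_band (F : nat -> G) :
  \sum_(l : 'I_n) odflt 0 (if (l < 4 * b)%N then Some (F l) else None) =
  \sum_(q < b) (F (4 * q + 0)%N + F (4 * q + 1)%N + F (4 * q + 2)%N + F (4 * q + 3)%N).
Proof.
rewrite -big_nat_blocks4 big_mkord (big_ord_widen _ _ b_le_n).
by rewrite [RHS]big_mkcond; apply: eq_bigr => l _; case: ifP.
Qed.

Lemma diag_array_row_sum a i :
  \sum_(j : 'I_n) odflt 0 (diag_array a i j) = (h + d) *+ 2 *+ b.
Proof.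
rewrite (reindex_inj (addrI i)) /=.
under eq_bigr => l _ do rewrite /diag_array /diag_offset [i + l]addrC addrK.
apply: etrans (sum_diag_band (diag_entry a i)) _.
rewrite -[b in RHS]card_ord -sumr_const; apply: eq_bigr => q _.
rewrite !diag_entry_block // /sign_pattern /row_shift /= subr0.
exact: klein_row_block.
Qed.

Lemma diag_array_col_sum a j :
  \sum_(i : 'I_n) odflt 0 (diag_array a i j) = (h + d) *+ 2 *+ b.
Proof.
rewrite (reindex_inj (inv_inj (subKr j))) /=.
under eq_bigr => l _ do rewrite /diag_array /diag_offset subKr -[in j - l](natr_Zp l).
apply: etrans (sum_diag_band (fun l => diag_entry a (j - l%:R) l)) _.
rewrite -[b in RHS]card_ord -sumr_const; apply: eq_bigr => q _.
rewrite !diag_entry_block // /sign_pattern /row_shift /= mulr1n !subr0.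
have -> : (4 * q + 1 = 4 * q + 0 + 1)%N by rewrite addn0.
have -> : (4 * q + 3 = 4 * q + 2 + 1)%N by rewrite -addnA.
rewrite !(natrD _ _ 1) !opprD !(addrA j).
exact: klein_col_block.
Qed.

Lemma diag_array_filled a i j : (diag_array a i j != None) = (diag_offset i j < 4 * b)%N.
Proof. by rewrite /diag_array; case: ifP. Qed.

Lemma diag_array_row_card a i : #|[set j | diag_array a i j != None]| = (4 * b)%N.
Proof.
rewrite -(card_ord_lt b_le_n) -[RHS](card_preimset _ (addIr (- i))).
by apply: eq_card => j; rewrite !inE diag_array_filled.
Qed.

Lemma diag_array_col_card a j : #|[set i | diag_array a i j != None]| = (4 * b)%N.
Proof.
rewrite -(card_ord_lt b_le_n) -[RHS](card_preimset _ (inv_inj (subKr j))).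
by apply: eq_card => i; rewrite !inE diag_array_filled.
Qed.

Lemma sign_pattern_inj p p' : (p < 4)%N -> (p' < 4)%N ->
  sign_pattern p = sign_pattern p' -> p = p'.
Proof. by case: p => [|[|[|[|?]]]]; case: p' => [|[|[|[|?]]]]. Qed.

Hypothesis x_inj : injective (fun p : bool * bool * ('I_c * 'I_b * 'I_n) => klein p.1 (x p.2)).

Lemma diag_array_inj a i j a' i' j' g :
  diag_array a i j = Some g -> diag_array a' i' j' = Some g -> (a, i, j) = (a', i', j').
Proof.
rewrite /diag_array; move Ejl : (diag_offset i j) => l; move Ejl' : (diag_offset i' j') => l'.
case: ifP => // l_lt [<-]; case: ifP => // l'_lt [] /esym /(@x_inj (_, _) (_, _)) /eqP.
rewrite !xpair_eqE => /andP [/eqP pat_eq /andP [/andP [/eqP <- /eqP q_eq] /eqP k_eq]].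
have mod4_lt k : (k %% 4 < 4)%N by rewrite ltn_mod.
have mod_eq : (l %% 4 = l' %% 4)%N := sign_pattern_inj (mod4_lt _) (mod4_lt _) pat_eq.
have div_eq : (l %/ 4 = l' %/ 4)%N.
  by move/(congr1 val): q_eq; rewrite /= !inordK // ltn_divLR // mulnC.
have ll' : l = l' by apply: val_inj; rewrite /= (divn_eq l 4) div_eq mod_eq -divn_eq.
by move: k_eq Ejl'; rewrite -ll' mod_eq => /addIr <-; rewrite -Ejl => /addIr ->.
Qed.

Lemma diag_array_is_MRS : #|G| = (n * (4 * b) * c)%N ->
  is_MRS (4 * b)%N (4 * b)%N diag_array.
Proof.
move=> cardG; split=> //.
- apply: card_fiber_Some => [|[[a i] j] [[a' i'] j'] g]; last exact: diag_array_inj.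
  by rewrite (card_filled_cells diag_array_row_card) cardG -mulnA mulnC.
- exact: diag_array_row_card.
- exact: diag_array_col_card.
exists ((h + d) *+ 2 *+ b), ((h + d) *+ 2 *+ b).
by split=> a; [apply: diag_array_row_sum | apply: diag_array_col_sum].
Qed.

Lemma diag_array_diagonal : diagonal_arrays (4 * b)%N diag_array.
Proof.
move=> a; exists 0 => i j; rewrite /diag_array /diag_offset.
case: ifP => [l_lt | l_ge]; apply/esym.
  by apply/existsP; exists (Ordinal l_lt); rewrite add0n on_diagE //; exact: ltn_ord (j - i).
apply/negbTE/existsPn => l; rewrite add0n on_diagE; last exact: leq_trans (ltn_ord l) b_le_n.
by apply: contraFN l_ge => /eqP ->.
Qed.

End DiagonalConstruction.

Theorem proposition5p8 (b n c : nat) :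
  (0 < b)%N -> (0 < n)%N -> (0 < c)%N -> (4 <= 4 * b <= n)%N ->
  forall G : finZmodType, #|G| = (4 * n * b * c)%N ->
  exists A : arrays G n n c,
    @is_MRS G n n (4 * b) (4 * b) c A /\ @diagonal_arrays G n (4 * b) c A.
Proof.
case: b => [|b] // _ _; case: c => [|c] // _ /andP [_ b_le_n] G cardG.
have [n' def_n] : exists n', n = n'.+2 by exists n.-2; lia.
subst n.
have G4 : (4 %| #|G|)%N by rewrite cardG -!mulnA dvdn_mulr.
have [h [d [d_neq0 dd h_nondouble hd_nondouble]]] := exists_klein_pair G4.
have T_le : (4 * #|{: 'I_c.+1 * 'I_b.+1 * 'I_n'.+2}| <= #|G|)%N.
  by rewrite cardG !card_prod !card_ord; nia.
have [x x_inj] := exists_klein_labelling d_neq0 dd h_nondouble hd_nondouble T_le.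
exists (diag_array h d x); split; last exact: diag_array_diagonal.
by apply: diag_array_is_MRS; rewrite // cardG; nia.
Qed.
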